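(* Let $\Gamma$ be the directed union of a directed family of subgroups $(\Gamma_i)_{i\in I}$, each of which is $2$-boundedly acyclic. Then $\Gamma$ is $2$-boundedly acyclic.
   Context: A group $G$ is $2$-boundedly acyclic if $\operatorname{H}^1_b(G;\mathbb{R}) \cong 0$ and $\operatorname{H}^2_b(G;\mathbb{R}) \cong 0$, where $\operatorname{H}^*_b(\cdot;\mathbb{R})$ is bounded cohomology with trivial real coefficients. *)

From mathcomp Require Import ssreflect ssrfun ssrbool eqtype ssrnat seq monoid.
From Stdlib Require Import Reals.

Set Implicit Arguments.
Unset Strict Implicit.
Unset Printing Implicit Defensive.

Local Open Scope group_scope.

Section BoundedCohomology.
Variable G : groupType.

Definition is_subgroup (H : G -> Prop) : Prop :=
  H 1 /\ (forall x y, H x -> H y -> H (x * y)) /\ (forall x, H x -> H x^-1).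

(* Real cochains: functions on lists of group elements; an n-cochain is
   evaluated on lists of length n (the n-tuple (g_1,...,g_n)). *)
Definition cochain := list G -> R.

(* merge i [g_1;...;g_k] replaces g_(i+1), g_(i+2) by g_(i+1) * g_(i+2). *)
Fixpoint merge (i : nat) (l : list G) : list G :=
  match i, l with
  | O, a :: b :: l' => (a * b) :: l'
  | S i', a :: l' => a :: merge i' l'
  | _, _ => l
  end.

Fixpoint sumR (n : nat) (F : nat -> R) : R :=
  match n with
  | O => 0%R
  | S k => (sumR k F + F (S k))%R
  end.

(* Inhomogeneous (bar) coboundary, trivial real coefficients, from degree n
   to degree n+1:
   (delta f)(g_1..g_{n+1}) = f(g_2..g_{n+1})
       + sum_{i=1}^n (-1)^i f(g_1..g_i g_{i+1}..g_{n+1})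
       + (-1)^{n+1} f(g_1..g_n). *)
Definition delta (n : nat) (f : cochain) : cochain := fun l =>
  (f (List.tl l)
   + sumR n (fun i => (-1) ^ i * f (merge (i - 1) l))
   + (-1) ^ (n + 1) * f (List.removelast l))%R.

(* Cochains on the subgroup S: only tuples with entries in S matter. *)
Definition on_tuples (H : G -> Prop) (n : nat) (P : list G -> Prop) : Prop :=
  forall l, length l = n -> List.Forall H l -> P l.

Definition bounded_cochain (H : G -> Prop) (n : nat) (f : cochain) : Prop :=
  exists C : R, on_tuples H n (fun l => (Rabs (f l) <= C)%R).

Definition bounded_cocycle (H : G -> Prop) (n : nat) (f : cochain) : Prop :=
  bounded_cochain H n f /\ on_tuples H n.+1 (fun l => delta n f l = 0%R).

(* H^{n+1}_b(S; R) = 0: every bounded (n+1)-cocycle on S is the coboundary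
   of a bounded n-cochain on S. *)
Definition Hb_vanishes (H : G -> Prop) (n : nat) : Prop :=
  forall f, bounded_cocycle H n.+1 f ->
    exists g, bounded_cochain H n g /\
      on_tuples H n.+1 (fun l => f l = delta n g l).

Definition two_boundedly_acyclic (H : G -> Prop) : Prop :=
  Hb_vanishes H 0 /\ Hb_vanishes H 1.

End BoundedCohomology.

(** A bounded real 2-cocycle [f] on the union restricts to each [Gam i], where it is the
    coboundary of a bounded cochain [g_i].  Two bounded primitives of [f] differ by a
    bounded homomorphism to [R], which vanishes; as the family is directed, the [g_i]
    therefore agree and glue to a primitive [g] on the whole group.  The gluing stays
    bounded because a bounded primitive is a quasimorphism whose defect is controlled by
    [f]: from [2 g(x) - g(x^2) = f(x, x)] one gets [|g(x)| <= sup |f|] uniformly in [i].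
    The vanishing of [H^1_b] holds for every group, since bounded homomorphisms to [R]
    are trivial. *)

From mathcomp Require Import ssreflect ssrfun ssrbool eqtype ssrnat seq monoid.
From Stdlib Require Import Reals Lra Psatz ClassicalEpsilon.

Set Implicit Arguments.
Unset Strict Implicit.
Unset Printing Implicit Defensive.

Local Open Scope R_scope.

Lemma quasi_doubling_bound (T : Type) (sq : T -> T) (S : T -> Prop) (u : T -> R) (C D : R) :
  (forall x, S x -> S (sq x)) ->
  (forall x, S x -> Rabs (u x) <= C) ->
  (forall x, S x -> Rabs (2 * u x - u (sq x)) <= D) ->
  forall x, S x -> Rabs (u x) <= D.
Proof.
move=> S_sq u_le_C u_defect.
have doubling : forall n x, S x -> 2 ^ n * (Rabs (u x) - D) <= C - D.
  elim=> [|n IHn] x Sx /=; first by have := u_le_C x Sx; lra.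
  have := IHn _ (S_sq x Sx); have := u_defect x Sx.
  have := pow_le 2 n ltac:(lra).
  split_Rabs; nra.
move=> x Sx; apply: Rnot_lt_le => gt_D.
set q := (C - D) / (Rabs (u x) - D).
have [N pow_large] := Pow_x_infinity 2 ltac:(split_Rabs; lra) (q + 1).
have := pow_large N (le_n N); have := doubling N x Sx.
rewrite (Rabs_pos_eq (2 ^ N)); last by apply: pow_le; lra.
have -> : C - D = q * (Rabs (u x) - D) by rewrite /q; field; lra.
nra.
Qed.

Section Cochains.
Variable G : groupType.
Implicit Types (S : G -> Prop) (f g : cochain G).

Lemma on_tuples1 S (P : list G -> Prop) :
  on_tuples S 1 P <-> forall x, S x -> P [:: x].
Proof.
split=> [P1 x Sx | P1 [|x [|y l]] //= _]; first by apply: P1 => //; constructor.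
by move=> Sx; apply: P1; exact: List.Forall_inv Sx.
Qed.

Lemma on_tuples2 S (P : list G -> Prop) :
  on_tuples S 2 P <-> forall x y, S x -> S y -> P [:: x; y].
Proof.
split=> [P2 x y Sx Sy | P2 [|x [|y [|z l]]] //= _ Sxy].
  by apply: P2 => //; repeat constructor.
have Sy := List.Forall_inv (List.Forall_inv_tail Sxy).
by apply: P2 => //; exact: List.Forall_inv Sxy.
Qed.

Lemma on_tuples_sub S S' n (P : list G -> Prop) :
  (forall x, S' x -> S x) -> on_tuples S n P -> on_tuples S' n P.
Proof. by move=> sub_S'S PS l size_l S'l; apply: PS => //; apply: List.Forall_impl S'l. Qed.

Lemma bounded_cochain_sub S S' n f :
  (forall x, S' x -> S x) -> bounded_cochain S n f -> bounded_cochain S' n f.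
Proof. by move=> sub_S'S [C f_le_C]; exists C; apply: on_tuples_sub f_le_C. Qed.

Lemma bounded_cocycle_sub S S' n f :
  (forall x, S' x -> S x) -> bounded_cocycle S n f -> bounded_cocycle S' n f.
Proof.
move=> sub_S'S [f_bounded f_closed].
by split; [exact: bounded_cochain_sub f_bounded | exact: on_tuples_sub f_closed].
Qed.

Lemma delta0_single g x : delta 0 g [:: x] = 0.
Proof. rewrite /delta /=; ring. Qed.

Lemma delta1_pair g x y : delta 1 g [:: x; y] = g [:: y] - g [:: (x * y : G)%g] + g [:: x].
Proof. rewrite /delta /=; ring. Qed.

Lemma bounded_hom_eq0 S (u : G -> R) :
  is_subgroup S -> (exists C, forall x, S x -> Rabs (u x) <= C) ->
  (forall x y, S x -> S y -> u (x * y)%g = u x + u y) ->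
  forall x, S x -> u x = 0.
Proof.
move=> [_ [S_mul _]] [C u_le_C] u_hom x Sx.
have S_sq y : S y -> S (y * y)%g by move=> Sy; exact: S_mul.
have u_defect y : S y -> Rabs (2 * u y - u (y * y)%g) <= 0.
  by move=> Sy; rewrite u_hom //; split_Rabs; lra.
have := quasi_doubling_bound S_sq u_le_C u_defect Sx.
split_Rabs; lra.
Qed.

Lemma Hb_vanishes0 S : is_subgroup S -> Hb_vanishes S 0.
Proof.
move=> S_subgroup f [[C /on_tuples1 f_le_C] /on_tuples2 f_closed].
exists (fun _ => 0); split.
  by exists 0 => l _ _; rewrite Rabs_R0; lra.
apply/on_tuples1 => x Sx; rewrite delta0_single.
apply: (bounded_hom_eq0 (S := S) (u := fun y => f [:: y])) => //.
  by exists C.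
move=> y z Sy Sz; have := f_closed y z Sy Sz.
rewrite delta1_pair; lra.
Qed.

Definition primitive S f g :=
  bounded_cochain S 1 g /\ on_tuples S 2 (fun l => f l = delta 1 g l).

Lemma primitive_sub S S' f g :
  (forall x, S' x -> S x) -> primitive S f g -> primitive S' f g.
Proof.
move=> sub_S'S [g_bounded f_eq].
by split; [exact: bounded_cochain_sub g_bounded | exact: on_tuples_sub f_eq].
Qed.

Lemma primitive_unique S f g1 g2 :
  is_subgroup S -> primitive S f g1 -> primitive S f g2 ->
  forall x, S x -> g1 [:: x] = g2 [:: x].
Proof.
move=> S_subgroup [[C1 /on_tuples1 g1_le] /on_tuples2 f_eq1].
move=> [[C2 /on_tuples1 g2_le] /on_tuples2 f_eq2] x Sx.
suff : g1 [:: x] - g2 [:: x] = 0 by lra.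
apply: (bounded_hom_eq0 (S := S) (u := fun y => g1 [:: y] - g2 [:: y])) => //.
  exists (C1 + C2) => y Sy; have := g1_le y Sy; have := g2_le y Sy.
  split_Rabs; lra.
move=> y z Sy Sz; have := f_eq1 y z Sy Sz; have := f_eq2 y z Sy Sz.
rewrite !delta1_pair; lra.
Qed.

Lemma primitive_bound S f g D :
  is_subgroup S -> primitive S f g -> on_tuples S 2 (fun l => Rabs (f l) <= D) ->
  forall x, S x -> Rabs (g [:: x]) <= D.
Proof.
move=> [_ [S_mul _]] [[C /on_tuples1 g_le_C] /on_tuples2 f_eq] /on_tuples2 f_le_D.
apply: (quasi_doubling_bound (T := G) (S := S) (sq := fun y => (y * y : G)%g)
                             (u := fun y => g [:: y]) (C := C)) => // y Sy.
  exact: S_mul.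
have := f_le_D y y Sy Sy.
by rewrite f_eq // delta1_pair; split_Rabs; lra.
Qed.

End Cochains.

Section DirectedUnion.
Variables (G : groupType) (I : Type) (Gam : I -> G -> Prop).
Hypothesis Gam_subgroup : forall i, is_subgroup (Gam i).
Hypothesis Gam_directed : forall i j, exists k,
  (forall x, Gam i x -> Gam k x) /\ (forall x, Gam j x -> Gam k x).
Hypothesis Gam_cover : forall x, exists i, Gam i x.
Hypothesis Gam_Hb2 : forall i, Hb_vanishes (Gam i) 1.
Variable f : cochain G.
Hypothesis f_cocycle : bounded_cocycle (fun _ => True) 2 f.

Lemma primitive_exists i : exists g, primitive (Gam i) f g.
Proof. exact/Gam_Hb2/(bounded_cocycle_sub _ f_cocycle). Qed.

Lemma primitives_agree i j gi gj x :
  primitive (Gam i) f gi -> primitive (Gam j) f gj -> Gam i x -> Gam j x ->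
  gi [:: x] = gj [:: x].
Proof.
move=> prim_i prim_j Gi_x Gj_x.
have [k [sub_ik sub_jk]] := Gam_directed i j.
have [gk prim_k] := primitive_exists k.
rewrite (primitive_unique (Gam_subgroup i) prim_i (primitive_sub sub_ik prim_k)) //.
by rewrite (primitive_unique (Gam_subgroup j) prim_j (primitive_sub sub_jk prim_k)).
Qed.

Lemma glued_value_exists x :
  exists r, exists i g, [/\ Gam i x, primitive (Gam i) f g & g [:: x] = r].
Proof.
have [i Gi_x] := Gam_cover x; have [g prim_g] := primitive_exists i.
by exists (g [:: x]), i, g.
Qed.

Definition glued_primitive : cochain G := fun l =>
  if l is [:: x] then sval (constructive_indefinite_description _ (glued_value_exists x))
  else 0.

Lemma glued_primitiveE i g x :
  primitive (Gam i) f g -> Gam i x -> glued_primitive [:: x] = g [:: x].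
Proof.
move=> prim_g Gi_x; rewrite /glued_primitive.
case: constructive_indefinite_description => r /= [j [gj [Gj_x prim_gj <-]]].
exact: primitives_agree prim_gj prim_g Gj_x Gi_x.
Qed.

Lemma glued_primitive_primitive : primitive (fun _ => True) f glued_primitive.
Proof.
have [[D /on_tuples2 f_le_D] _] := f_cocycle.
split.
  exists D; apply/on_tuples1 => x _.
  have [i Gi_x] := Gam_cover x; have [g prim_g] := primitive_exists i.
  rewrite (glued_primitiveE prim_g Gi_x).
  apply: primitive_bound (Gam_subgroup i) prim_g _ _ Gi_x.
  by apply/on_tuples2 => y z _ _; apply: f_le_D.
apply/on_tuples2 => x y _ _.
have [i Gi_x] := Gam_cover x; have [j Gj_y] := Gam_cover y.
have [k [sub_ik sub_jk]] := Gam_directed i j.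
have [g prim_g] := primitive_exists k.
have Gk_x := sub_ik _ Gi_x; have Gk_y := sub_jk _ Gj_y.
have Gk_xy := (Gam_subgroup k).2.1 _ _ Gk_x Gk_y.
rewrite delta1_pair !(glued_primitiveE prim_g) // -delta1_pair.
by case: prim_g => _ /on_tuples2 f_eq; apply: f_eq.
Qed.

End DirectedUnion.

Theorem corollary4p16 (Gamma : groupType) (I : Type)
  (Gam : I -> (Gamma -> Prop))
  (Hsub : forall i, is_subgroup (Gam i))
  (Hdir : forall i j, exists k,
      (forall g, Gam i g -> Gam k g) /\ (forall g, Gam j g -> Gam k g))
  (Hunion : forall g : Gamma, exists i, Gam i g)
  (Hbac : forall i, two_boundedly_acyclic (Gam i)) :
  two_boundedly_acyclic (fun _ : Gamma => True).
Proof.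
split; first by apply: Hb_vanishes0; do !split.
move=> f f_cocycle.
eexists; exact: (glued_primitive_primitive Hsub Hdir Hunion (fun i => (Hbac i).2) f_cocycle).
Qed.
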